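(* Let $N\ge2$, let $\mathbf{A}=[1\ 1\ \cdots\ 1]\in\mathbb{R}^{1\times N}$, let $1\le r<N$, let $i_1,\dots,i_r$ be distinct indices in $\{1,\dots,N\}$, and let $\mathbf{B}=[\vec e_{i_1},\dots,\vec e_{i_r}]^{\mathsf T}\in\mathbb{R}^{r\times N}$, where $\vec e_i$ are the standard basis vectors of $\mathbb{R}^N$. Then the principal angles $\theta_1\le\cdots\le\theta_{N-r}$ between the subspaces $\mathcal N(\mathbf{A})$ and $\mathcal N(\mathbf{B})$ satisfy $$\cos\theta_1=\cdots=\cos\theta_{N-r-1}=1\quad\text{and}\quad \cos\theta_{N-r}=\sqrt{\tfrac{r}{N}}.$$
   Context: $\mathcal N(\cdot)$ denotes the null space. For subspaces $\mathcal U,\mathcal V\subseteq\mathbb{R}^N$ with $\dim\mathcal U=p\le\dim\mathcal V$ (here $\mathcal U=\mathcal N(\mathbf B)$, of dimension $N-r$, and $\mathcal V=\mathcal N(\mathbf A)$, of dimension $N-1$), the principal angles $\theta_k\in[0,\pi/2]$, $k=1,\dots,p$, are defined recursively by $\cos\theta_k=\vec u_k^{\mathsf T}\vec v_k=\max_{\vec u\in\mathcal U}\max_{\vec v\in\mathcal V}\vec u^{\mathsf T}\vec v$ subject to $\|\vec u\|_2=\|\vec v\|_2=1$, $\vec u_j^{\mathsf T}\vec u=0$, $\vec v_j^{\mathsf T}\vec v=0$ for $j=1,\dots,k-1$. *)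

From HB Require Import structures.
From mathcomp Require Import all_boot all_order all_algebra.
From mathcomp Require Import reals.
Set Implicit Arguments. Unset Strict Implicit. Unset Printing Implicit Defensive.
Import Order.TTheory GRing.Theory Num.Theory.
Local Open Scope ring_scope.

Definition dotv (R : realType) (N : nat) (x y : 'cV[R]_N) : R :=
  \sum_(i < N) x i 0 * y i 0.

Definition in_null (R : realType) (m N : nat) (M : 'M[R]_(m, N)) (x : 'cV[R]_N) : Prop :=
  M *m x = 0.

Definition onesA (R : realType) (N : nat) : 'M[R]_(1, N) := const_mx 1.

Definition selB (R : realType) (N r : nat) (i : 'I_r -> 'I_N) : 'M[R]_(r, N) :=
  \matrix_(k < r, j < N) (j == i k)%:R.

(* (u_k, v_k)_{k < p} are principal vector pairs for U = N(MU), V = N(MV),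
   following the recursive definition: for each k, u_k, v_k are unit vectors
   in U, V resp., orthogonal to the previous u_j, v_j (j < k), and maximize
   u^T v among all such admissible pairs.  cos theta_k = u_k^T v_k. *)
Definition principal_pairs (R : realType) (m n N p : nat)
    (MU : 'M[R]_(m, N)) (MV : 'M[R]_(n, N)) (u v : 'I_p -> 'cV[R]_N) : Prop :=
  forall k : 'I_p,
    [/\ in_null MU (u k) /\ in_null MV (v k),
        dotv (u k) (u k) = 1, dotv (v k) (v k) = 1,
        (forall j : 'I_p, (j < k)%N -> dotv (u j) (u k) = 0 /\ dotv (v j) (v k) = 0)
      & (forall x y : 'cV[R]_N, in_null MU x -> in_null MV y ->
           dotv x x = 1 -> dotv y y = 1 ->
           (forall j : 'I_p, (j < k)%N -> dotv (u j) x = 0 /\ dotv (v j) y = 0) ->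
           dotv x y <= dotv (u k) (v k))].

From HB Require Import structures.
From mathcomp Require Import all_boot all_order all_algebra.
From mathcomp Require Import reals ring lra zify.
Import Order.TTheory GRing.Theory Num.Theory.
Set Implicit Arguments. Unset Strict Implicit. Unset Printing Implicit Defensive.
Local Open Scope ring_scope.

(* The null space U of B consists of the vectors vanishing on the selected
   coordinates and the null space V of A of the zero-sum vectors, so U has
   dimension N - r and U ∩ V dimension N - r - 1.  For k < N - r - 1 a dimension
   count yields a unit vector of U ∩ V orthogonal to the earlier pairs, so the
   k-th maximum is 1, which forces u_k = v_k; these pairs run through an
   orthonormal basis of U ∩ V.  The last u is then orthogonal within U to all of
   U ∩ V, hence plus or minus the normalised indicator w of the unselected
   coordinates, and its best partner in V is the normalised projection
   w - ((N - r) / N) 1 of w onto V, at cosine sqrt (r / N). *)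

Section InnerProduct.
Variables (R : realType) (N : nat).
Implicit Types (x y z : 'cV[R]_N) (a : R).

Lemma dotvC x y : dotv x y = dotv y x.
Proof. by apply: eq_bigr => t _; rewrite mulrC. Qed.

Lemma dotvDl x y z : dotv (x + y) z = dotv x z + dotv y z.
Proof. by rewrite /dotv -big_split; apply: eq_bigr => t _; rewrite mxE mulrDl. Qed.

Lemma dotvZl a x z : dotv (a *: x) z = a * dotv x z.
Proof. by rewrite /dotv mulr_sumr; apply: eq_bigr => t _; rewrite mxE mulrA. Qed.

Lemma dotvBl x y z : dotv (x - y) z = dotv x z - dotv y z.
Proof. by rewrite dotvDl -scaleN1r dotvZl mulN1r. Qed.

Lemma dotvZr a x z : dotv z (a *: x) = a * dotv z x.
Proof. by rewrite dotvC dotvZl dotvC. Qed.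

Lemma dotvBr x y z : dotv z (x - y) = dotv z x - dotv z y.
Proof. by rewrite dotvC dotvBl !(dotvC z). Qed.

Lemma dotv_ge0 x : 0 <= dotv x x.
Proof. by apply: sumr_ge0 => t _; rewrite -expr2 sqr_ge0. Qed.

Lemma dotv_eq0 x : (dotv x x == 0) = (x == 0).
Proof.
apply/idP/eqP => [|->]; last by rewrite /dotv big1 // => t _; rewrite mxE mul0r.
rewrite psumr_eq0 => [/allP x0|t _]; last by rewrite -expr2 sqr_ge0.
apply/matrixP => t j; rewrite ord1 !mxE.
by have /(_ (mem_index_enum t))/implyP/(_ isT) := x0 t; rewrite mulf_eq0 orbb => /eqP.
Qed.

Lemma dotv_unit_le1 x y : dotv x x = 1 -> dotv y y = 1 -> dotv x y <= 1.
Proof.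
move=> x1 y1; have := dotv_ge0 (x - y).
by rewrite !(dotvBl, dotvBr) x1 y1 (dotvC y x); lra.
Qed.

Lemma dotv_unit_eq1 x y : dotv x x = 1 -> dotv y y = 1 -> dotv x y = 1 -> x = y.
Proof.
move=> x1 y1 xy; apply/eqP; rewrite -subr_eq0 -dotv_eq0.
by rewrite !(dotvBl, dotvBr) x1 y1 (dotvC y x) xy; apply/eqP; lra.
Qed.

Definition unitv x := (Num.sqrt (dotv x x))^-1 *: x.

Lemma dotv_unitv x : x != 0 -> dotv (unitv x) (unitv x) = 1.
Proof.
rewrite -dotv_eq0 => x0; rewrite dotvZl dotvZr mulrA -expr2 exprVn.
by rewrite sqr_sqrtr ?dotv_ge0 // mulVf.
Qed.

Lemma dotv_unitvl x y : dotv (unitv x) y = dotv x y / Num.sqrt (dotv x x).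
Proof. by rewrite dotvZl mulrC. Qed.

Lemma dotv_unitvr x y : dotv y (unitv x) = dotv y x / Num.sqrt (dotv x x).
Proof. by rewrite dotvC dotv_unitvl dotvC. Qed.

Definition orthonormal_fam k (h : 'I_k -> 'cV[R]_N) :=
  forall j l, dotv (h j) (h l) = (j == l)%:R.

Lemma orthonormal_fam_of_lt k (h : 'I_k -> 'cV[R]_N) :
  (forall j, dotv (h j) (h j) = 1) ->
  (forall j l : 'I_k, (j < l)%N -> dotv (h j) (h l) = 0) -> orthonormal_fam h.
Proof.
move=> h1 h0 j l; case: (ltngtP j l) => [jl|lj|/val_inj ->]; last by rewrite eqxx.
- by rewrite h0 // (ltn_eqF jl : (j == l) = false).
- by rewrite dotvC h0 // (gtn_eqF lj : (j == l) = false).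
Qed.

Definition rowsmx k (h : 'I_k -> 'cV[R]_N) : 'M[R]_(k, N) := \matrix_(j, t) h j t 0.

Lemma rowsmx_mulE k (h : 'I_k -> 'cV[R]_N) x j : (rowsmx h *m x) j 0 = dotv (h j) x.
Proof. by rewrite mxE; apply: eq_bigr => t _; rewrite mxE. Qed.

Lemma rowsmx_mul_eq0 k (h : 'I_k -> 'cV[R]_N) x :
  rowsmx h *m x = 0 <-> forall j, dotv (h j) x = 0.
Proof.
split=> [hx j|hx]; first by rewrite -rowsmx_mulE hx mxE.
by apply/matrixP => j t; rewrite ord1 rowsmx_mulE hx mxE.
Qed.

Lemma mul_rowsmx_trE m k (M : 'M[R]_(m, N)) (h : 'I_k -> 'cV[R]_N) s j :
  (M *m (rowsmx h)^T) s j = (M *m h j) s 0.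
Proof. by rewrite !mxE; apply: eq_bigr => t _; rewrite !mxE. Qed.

Lemma rowsmx_orthonormal k (h : 'I_k -> 'cV[R]_N) :
  orthonormal_fam h -> rowsmx h *m (rowsmx h)^T = 1%:M.
Proof. by move=> hh; apply/matrixP => j l; rewrite mul_rowsmx_trE rowsmx_mulE hh mxE. Qed.

End InnerProduct.

Section OrthonormalRows.
Variables (R : realType) (N : nat).
Implicit Types x y : 'cV[R]_N.

Lemma orthonormal_rows_free m (Q : 'M[R]_(m, N)) : Q *m Q^T = 1%:M -> row_free Q.
Proof.
move=> QQ; rewrite /row_free eqn_leq rank_leq_row /=.
by rewrite -[X in (X <= _)%N](mxrank1 R m) -QQ mxrankM_maxl.
Qed.

Lemma orthonormal_rows_mul_eq0 m (Q : 'M[R]_(m, N)) x :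
  Q *m Q^T = 1%:M -> (N <= m)%N -> Q *m x = 0 -> x = 0.
Proof.
move=> QQ Nm Qx; have /eqP rkQ := orthonormal_rows_free QQ.
have QTfree : row_free Q^T.
  by rewrite /row_free mxrank_tr rkQ eqn_leq Nm -rkQ rank_leq_col.
apply: trmx_inj; apply: (row_free_inj QTfree).
by rewrite /= -trmx_mul Qx !trmx0 mul0mx.
Qed.

Lemma col_mx_orthonormal m k (C : 'M[R]_(m, N)) (G : 'M[R]_(k, N)) :
  C *m C^T = 1%:M -> G *m G^T = 1%:M -> C *m G^T = 0 ->
  col_mx C G *m (col_mx C G)^T = 1%:M.
Proof.
move=> CC GG CG; rewrite tr_col_mx mul_col_mx !mul_mx_row CC GG CG.
by rewrite -[G *m C^T]trmxK trmx_mul trmxK CG trmx0 [RHS](scalar_mx_block m k).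
Qed.

Lemma exists_unit_null m (C : 'M[R]_(m, N)) :
  (m < N)%N -> exists x, C *m x = 0 /\ dotv x x = 1.
Proof.
move=> mN; set y := (nz_row (kermx C^T))^T.
have y0 : y != 0.
  rewrite -(inj_eq trmx_inj) trmxK trmx0 nz_row_eq0 -mxrank_eq0 mxrank_ker mxrank_tr.
  by rewrite subn_eq0 -ltnNge (leq_ltn_trans (rank_leq_row C)).
have Cy : C *m y = 0.
  apply: trmx_inj; rewrite trmx_mul trmxK trmx0.
  exact/sub_kermxP/nz_row_sub.
exists (unitv y); split; last exact: dotv_unitv.
by rewrite -scalemxAr Cy scaler0.
Qed.

Lemma exists_unit_orthogonal m (C : 'M[R]_(m, N)) p (g : 'I_p -> 'cV[R]_N) k :
  (k <= p)%N -> (m + k < N)%N ->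
  exists x, [/\ C *m x = 0, dotv x x = 1 & forall j : 'I_p, (j < k)%N -> dotv (g j) x = 0].
Proof.
move=> kp mkN; set G := rowsmx (fun j : 'I_k => g (widen_ord kp j)).
have [x [/eqP]] := exists_unit_null (col_mx C G) mkN.
rewrite mul_col_mx col_mx_eq0 => /andP[/eqP Cx /eqP /rowsmx_mul_eq0 Gx] x1.
exists x; split => // j jk; rewrite -(Gx (Ordinal jk)).
by congr (dotv (g _) x); apply: val_inj.
Qed.

Lemma exists_orthonormal_prefix m (C : 'M[R]_(m, N)) p n :
  (n <= p)%N -> (m + n <= N)%N ->
  exists f : 'I_p -> 'cV[R]_N, forall j l : 'I_p, (j < n)%N -> (l < n)%N ->
    C *m f j = 0 /\ dotv (f j) (f l) = (j == l)%:R.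
Proof.
elim: n => [|n IH] np mnN; first by exists (fun=> 0).
rewrite addnS in mnN; have [f fP] := IH (ltnW np) (ltnW mnN).
have [x [Cx x1 fx]] := exists_unit_orthogonal C f (ltnW np) mnN.
exists (fun j => if val j == n then x else f j) => j l.
rewrite !ltnS [(j <= n)%N]leq_eqVlt [(l <= n)%N]leq_eqVlt -val_eqE /=.
case/predU1P => [-> | jn]; case/predU1P => [-> | ln]; rewrite ?eqxx.
- by split; last exact: x1.
- by rewrite (ltn_eqF ln) (gtn_eqF ln) dotvC fx.
- by rewrite (ltn_eqF jn) fx //; have [] := fP j j jn jn.
- by rewrite (ltn_eqF jn) (ltn_eqF ln); apply: fP.
Qed.

Lemma orthonormal_null_eq0 m k (C : 'M[R]_(m, N)) (h : 'I_k -> 'cV[R]_N) x :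
  C *m C^T = 1%:M -> orthonormal_fam h -> (forall j, C *m h j = 0) -> (N <= m + k)%N ->
  C *m x = 0 -> (forall j, dotv (h j) x = 0) -> x = 0.
Proof.
move=> CC hh Ch Nmk Cx hx.
apply: (@orthonormal_rows_mul_eq0 _ (col_mx C (rowsmx h))) Nmk _.
  apply: col_mx_orthonormal CC (rowsmx_orthonormal hh) _.
  by apply/matrixP => a j; rewrite mul_rowsmx_trE Ch !mxE.
by rewrite mul_col_mx Cx (proj2 (rowsmx_mul_eq0 _ _) hx) col_mx0.
Qed.

Lemma orthonormal_null_expand m k (C : 'M[R]_(m, N)) (h : 'I_k -> 'cV[R]_N) x l :
  C *m C^T = 1%:M -> orthonormal_fam h -> (forall j, C *m h j = 0) -> (N <= m + k)%N ->
  C *m x = 0 -> (forall j, j != l -> dotv (h j) x = 0) -> x = dotv (h l) x *: h l.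
Proof.
move=> CC hh Ch Nmk Cx hx; apply/eqP; rewrite -subr_eq0; apply/eqP.
apply: (orthonormal_null_eq0 CC hh Ch Nmk).
  by rewrite mulmxBr -scalemxAr Cx Ch scaler0 subr0.
move=> j; rewrite dotvBr dotvZr hh.
by case: eqVneq => [->|jl]; rewrite ?mulr1 ?subrr // hx // mulr0 subr0.
Qed.

End OrthonormalRows.

Section SelectionNullSpaces.
Variables (R : realType) (N r : nat) (i : 'I_r -> 'I_N).
Hypotheses (hi : injective i) (r_gt0 : (0 < r)%N) (r_lt_N : (r < N)%N).
Implicit Types x y : 'cV[R]_N.
Local Notation B := (selB R i).
Local Notation A := (onesA R N).
Local Notation p := (N - r)%N.

Definition onesv : 'cV[R]_N := const_mx 1.

Definition unselv : 'cV[R]_N := \col_t ((t \notin codom i)%:R).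

Lemma selB_mulE k (M : 'M[R]_(N, k)) m b : (B *m M) m b = M (i m) b.
Proof.
rewrite mxE (bigD1 (i m)) //= mxE eqxx mul1r big1 ?addr0 // => t /negbTE.
by rewrite mxE => ->; rewrite mul0r.
Qed.

Lemma selB_null x : B *m x = 0 <-> forall m, x (i m) 0 = 0.
Proof.
split=> [Bx m|x0]; first by rewrite -selB_mulE Bx mxE.
by apply/matrixP => m b; rewrite ord1 selB_mulE x0 mxE.
Qed.

Lemma selB_orthonormal : B *m B^T = 1%:M.
Proof. by apply/matrixP => a b; rewrite selB_mulE !mxE (inj_eq hi). Qed.

Lemma onesA_null x : A *m x = 0 <-> dotv onesv x = 0.
Proof.
have E : (A *m x) 0 0 = dotv onesv x by rewrite mxE; apply: eq_bigr => t _; rewrite !mxE.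
split=> [Ax|x0]; first by rewrite -E Ax mxE.
by apply/matrixP => a b; rewrite !ord1 E x0 mxE.
Qed.

Lemma unselv_null : B *m unselv = 0.
Proof. by apply/selB_null => m; rewrite mxE codom_f. Qed.

Lemma dotv_unselv x : B *m x = 0 -> dotv unselv x = dotv onesv x.
Proof.
move/selB_null => x0; apply: eq_bigr => t _; rewrite !mxE.
by case: (boolP (t \in codom i)) => [/codomP [m ->]|_]; rewrite ?x0 ?mulr0.
Qed.

Lemma dotv_onesv_unselv : dotv onesv unselv = p%:R.
Proof.
have card_unsel : #|[predC codom i]| = p.
  by apply/eqP; rewrite -(eqn_add2l r) -{1}(card_ord r) -(card_codom hi) cardC card_ord subnKC // ltnW.
rewrite -card_unsel -sumr_const big_mkcond /=.
by apply: eq_bigr => t _; rewrite !mxE mul1r inE; case: (t \in codom i).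
Qed.

Lemma dotv_unselv_unselv : dotv unselv unselv = p%:R.
Proof. by rewrite dotv_unselv ?unselv_null ?dotv_onesv_unselv. Qed.

Lemma dotv_onesv_onesv : dotv onesv onesv = N%:R.
Proof. by rewrite /dotv (eq_bigr (fun=> 1)) ?sumr_const ?card_ord // => t _; rewrite !mxE mulr1. Qed.

Lemma natr_N_split : [/\ (N%:R : R) = r%:R + p%:R, (r%:R : R) != 0, (p%:R : R) != 0 & (N%:R : R) != 0].
Proof.
rewrite -natrD subnKC; last exact: ltnW.
by split; rewrite // pnatr_eq0 -lt0n ?subn_gt0 // (ltn_trans r_gt0 r_lt_N).
Qed.

Definition unselv_projV : 'cV[R]_N := unselv - (p%:R / N%:R) *: onesv.

Lemma unselv_projV_null : A *m unselv_projV = 0.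
Proof.
have [EN r0 p0 N0] := natr_N_split.
apply/onesA_null; rewrite dotvBr dotvZr dotv_onesv_unselv dotv_onesv_onesv.
by rewrite divfK // subrr.
Qed.

Lemma dotv_unselv_projV : dotv unselv unselv_projV = dotv unselv_projV unselv_projV.
Proof.
have /onesA_null o0 := unselv_projV_null.
by rewrite [in RHS]dotvBl dotvZl o0 mulr0 subr0.
Qed.

Lemma dotv_unselv_projV_val : dotv unselv_projV unselv_projV = p%:R * (r%:R / N%:R).
Proof.
have [EN r0 p0 N0] := natr_N_split.
rewrite -dotv_unselv_projV dotvBr dotvZr dotv_unselv_unselv dotvC dotv_onesv_unselv.
by move: (p%:R : R) (r%:R : R) p0 r0 EN N0 => P Q P0 Q0 -> N0; field.
Qed.

Definition u_last : 'cV[R]_N := unitv unselv.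
Definition v_last : 'cV[R]_N := unitv unselv_projV.

Lemma dotv_unselv_gt0 : 0 < dotv unselv unselv.
Proof. by rewrite dotv_unselv_unselv ltr0n subn_gt0. Qed.

Lemma dotv_unselv_projV_gt0 : 0 < dotv unselv_projV unselv_projV.
Proof.
by rewrite dotv_unselv_projV_val mulr_gt0 ?divr_gt0 ?ltr0n ?subn_gt0 // (ltn_trans r_gt0 r_lt_N).
Qed.

Lemma sqrt_dotv_unselv_neq0 : Num.sqrt (dotv unselv unselv) != 0.
Proof. by rewrite sqrtr_eq0 -ltNge dotv_unselv_gt0. Qed.

Lemma sqrt_dotv_unselv_projV_neq0 : Num.sqrt (dotv unselv_projV unselv_projV) != 0.
Proof. by rewrite sqrtr_eq0 -ltNge dotv_unselv_projV_gt0. Qed.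

Lemma u_last_null : B *m u_last = 0.
Proof. by rewrite -scalemxAr unselv_null scaler0. Qed.

Lemma v_last_null : A *m v_last = 0.
Proof. by rewrite -scalemxAr unselv_projV_null scaler0. Qed.

Lemma u_last_unit : dotv u_last u_last = 1.
Proof. by apply: dotv_unitv; rewrite -dotv_eq0 gt_eqF // dotv_unselv_gt0. Qed.

Lemma v_last_unit : dotv v_last v_last = 1.
Proof. by apply: dotv_unitv; rewrite -dotv_eq0 gt_eqF // dotv_unselv_projV_gt0. Qed.

Lemma u_last_orth x : B *m x = 0 -> A *m x = 0 -> dotv u_last x = 0.
Proof. by move=> Bx /onesA_null Ax; rewrite dotv_unitvl dotv_unselv // Ax mul0r. Qed.

Lemma v_last_orth x : B *m x = 0 -> A *m x = 0 -> dotv v_last x = 0.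
Proof.
move=> Bx /onesA_null Ax.
by rewrite dotv_unitvl dotvBl dotvZl dotv_unselv // Ax mulr0 subr0 mul0r.
Qed.

Lemma dotv_u_last_onesA y :
  A *m y = 0 -> dotv u_last y = dotv u_last v_last * dotv v_last y.
Proof.
move=> /onesA_null Ay.
have uy : dotv unselv y = dotv unselv_projV y by rewrite dotvBl dotvZl Ay mulr0 subr0.
rewrite !dotv_unitvl dotv_unitvr uy dotv_unselv_projV.
rewrite -{1}[dotv unselv_projV unselv_projV]sqr_sqrtr ?dotv_ge0 //.
by field; rewrite sqrt_dotv_unselv_projV_neq0 sqrt_dotv_unselv_neq0.
Qed.

Lemma dotv_u_last_v_last : dotv u_last v_last = Num.sqrt (r%:R / N%:R).
Proof.
rewrite dotv_unitvl dotv_unitvr dotv_unselv_projV.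
rewrite -{1}[dotv unselv_projV unselv_projV]sqr_sqrtr ?dotv_ge0 // expr2.
rewrite mulfK ?sqrt_dotv_unselv_projV_neq0 //.
rewrite dotv_unselv_projV_val sqrtrM ?ler0n // -dotv_unselv_unselv.
by rewrite mulrAC divff ?mul1r ?sqrt_dotv_unselv_neq0.
Qed.

Lemma scaled_u_last_le a y :
  a ^+ 2 = 1 -> A *m y = 0 -> dotv y y = 1 -> dotv (a *: u_last) y <= Num.sqrt (r%:R / N%:R).
Proof.
move=> a1 Ay y1; rewrite dotvZl dotv_u_last_onesA // dotv_u_last_v_last mulrCA.
rewrite -[X in _ <= X]mulr1 ler_wpM2l ?sqrtr_ge0 // -dotvZl dotv_unit_le1 //.
by rewrite dotvZl dotvZr v_last_unit mulr1 -expr2.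
Qed.

Lemma dotv_scaled_last_pair a :
  a ^+ 2 = 1 -> dotv (a *: u_last) (a *: v_last) = Num.sqrt (r%:R / N%:R).
Proof. by move=> a1; rewrite dotvZl dotvZr mulrA -expr2 a1 mul1r dotv_u_last_v_last. Qed.

Lemma selB_null_expand (h : 'I_p -> 'cV[R]_N) l x :
  orthonormal_fam h -> (forall j, B *m h j = 0) -> B *m x = 0 ->
  (forall j, j != l -> dotv (h j) x = 0) -> x = dotv (h l) x *: h l.
Proof.
move=> hh hB Bx hx; apply: (orthonormal_null_expand selB_orthonormal hh hB _ Bx hx).
by rewrite subnKC // ltnW.
Qed.

Lemma u_last_expand (h : 'I_p -> 'cV[R]_N) l x :
  orthonormal_fam h -> (forall j, B *m h j = 0) -> (forall j, j != l -> A *m h j = 0) ->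
  B *m x = 0 -> (forall j, j != l -> dotv (h j) x = 0) -> x = dotv u_last x *: u_last.
Proof.
move=> hh hB hA Bx hx.
have hu j : j != l -> dotv (h j) u_last = 0 by move=> jl; rewrite dotvC u_last_orth ?hA.
have ue := selB_null_expand hh hB u_last_null hu.
have xe := selB_null_expand hh hB Bx hx.
set b := dotv (h l) u_last in ue; set a := dotv (h l) x in xe.
have b1 : b * b = 1 by rewrite -u_last_unit [in RHS]ue dotvZl dotvZr hh eqxx mulr1.
by rewrite [in dotv u_last x]ue dotvZl -/a [in RHS]ue scalerA mulrAC b1 mul1r.
Qed.

Lemma unit_scaled_u_last a : dotv (a *: u_last) (a *: u_last) = 1 -> a ^+ 2 = 1.
Proof. by rewrite dotvZl dotvZr u_last_unit mulr1 -expr2. Qed.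

Lemma last_pair_le (h : 'I_p -> 'cV[R]_N) l x y :
  orthonormal_fam h -> (forall j, B *m h j = 0) -> (forall j, j != l -> A *m h j = 0) ->
  B *m x = 0 -> dotv x x = 1 -> (forall j, j != l -> dotv (h j) x = 0) ->
  A *m y = 0 -> dotv y y = 1 -> dotv x y <= Num.sqrt (r%:R / N%:R).
Proof.
move=> hh hB hA Bx x1 hx Ay y1; have xe := u_last_expand hh hB hA Bx hx.
by rewrite xe scaled_u_last_le // unit_scaled_u_last // -xe.
Qed.

Lemma lt_last_index (j k : 'I_p) : ~~ (k < p - 1)%N -> j != k -> (j < p - 1)%N.
Proof. by rewrite -val_eqE /=; have := ltn_ord j; have := ltn_ord k; lia. Qed.

Lemma principal_pairs_exist : exists u v : 'I_p -> 'cV[R]_N, principal_pairs B A u v.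
Proof.
have rpN : (r + 1 + (p - 1) <= N)%N by lia.
have [f fP] := exists_orthonormal_prefix (col_mx B A) (leq_subr 1 p) rpN.
have fBA (j : 'I_p) : (j < p - 1)%N -> B *m f j = 0 /\ A *m f j = 0.
  by move=> jp; have [/eqP] := fP j j jp jp; rewrite mul_col_mx col_mx_eq0 => /andP[/eqP ? /eqP ?].
pose u (k : 'I_p) : 'cV[R]_N := if (k < p - 1)%N then f k else u_last.
pose v (k : 'I_p) : 'cV[R]_N := if (k < p - 1)%N then f k else v_last.
have uB (k : 'I_p) : B *m u k = 0 by rewrite /u; case: ifP => [/fBA[]|_] //; exact: u_last_null.
have u_orth : orthonormal_fam u.
  apply: orthonormal_fam_of_lt => [j|j l jl]; rewrite /u.
    by case: ifP => jp; [have [_ ->] := fP j j jp jp; rewrite eqxx | exact: u_last_unit].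
  have jp : (j < p - 1)%N by have := ltn_ord l; lia.
  rewrite jp; case: ifP => lp; last by have [? ?] := fBA j jp; rewrite dotvC u_last_orth.
  by have [_ ->] := fP j l jp lp; rewrite (ltn_eqF jl : (j == l) = false).
exists u, v => k; case: (boolP (k < p - 1)%N) => kp.
  have [Bk Ak] := fBA k kp; have [_ fk] := fP k k kp kp; rewrite eqxx in fk.
  rewrite /u /v kp; split=> // [j jk|x y _ _ x1 y1 _]; last by rewrite fk dotv_unit_le1.
  have jp := ltn_trans jk kp; rewrite jp.
  by have [_ ->] := fP j k jp kp; rewrite (ltn_eqF jk : (j == k) = false).
rewrite /u /v (negbTE kp); split.
- by split; [exact: u_last_null | exact: v_last_null].
- exact: u_last_unit.
- exact: v_last_unit.
- move=> j jk; have jp := lt_last_index kp (negbT (ltn_eqF jk) : j != k); have [? ?] := fBA j jp.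
  by rewrite jp !(dotvC (f j)) u_last_orth ?v_last_orth.
move=> x y Bx Ay x1 y1 xo; rewrite dotv_u_last_v_last.
have hx (j : 'I_p) : j != k -> dotv (u j) x = 0.
  move=> jk; apply: (proj1 (xo j _)).
  by have := lt_last_index kp jk; have := ltn_ord k; move: kp; lia.
apply: (last_pair_le u_orth uB _ Bx x1 hx Ay y1) => j jk.
by rewrite /u (lt_last_index kp jk); case: (fBA j (lt_last_index kp jk)).
Qed.

Section PrincipalPairs.
Variables u v : 'I_p -> 'cV[R]_N.
Hypothesis uv_principal : principal_pairs B A u v.

Lemma principal_pairs_orthonormal : orthonormal_fam u.
Proof.
apply: orthonormal_fam_of_lt => [j|j l jl]; first by have [] := uv_principal j.
by have [_ _ _ /(_ j jl) []] := uv_principal l.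
Qed.

Lemma principal_pairs_eq (k : 'I_p) : (k < p - 1)%N -> u k = v k.
Proof.
move: k; suff uv n (k : 'I_p) : val k = n -> (k < p - 1)%N -> u k = v k by move=> k; apply: uv.
elim/ltn_ind: n k => n IH k kn kp.
have [[Bu Av] u1 v1 _ umax] := uv_principal k.
have rkN : (r + 1 + k < N)%N by lia.
have [x [/eqP]] := exists_unit_orthogonal (col_mx B A) u (ltnW (ltn_ord k)) rkN.
rewrite mul_col_mx col_mx_eq0 => /andP[/eqP Bx /eqP Ax] x1 ux.
apply: (dotv_unit_eq1 u1 v1); apply/le_anti/andP; split; first exact: dotv_unit_le1 u1 v1.
rewrite -{1}x1; apply: umax => // j jk; rewrite -(IH j _ j) ?ux //; first by rewrite -kn.
exact: ltn_trans jk kp.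
Qed.

Lemma principal_pairs_cos1 (k : 'I_p) : (k < p - 1)%N -> dotv (u k) (v k) = 1.
Proof. by move=> kp; rewrite -principal_pairs_eq //; have [] := uv_principal k. Qed.

Lemma principal_pairs_cos_last (k : 'I_p) :
  (k : nat) = (p - 1)%N -> dotv (u k) (v k) = Num.sqrt (r%:R / N%:R).
Proof.
move=> kp; have kl : ~~ (k < p - 1)%N by rewrite kp ltnn.
have [[Bu Av] u1 v1 uv_orth umax] := uv_principal k.
have uB j : B *m u j = 0 by have [[]] := uv_principal j.
have uA (j : 'I_p) : j != k -> A *m u j = 0.
  move=> jk; rewrite principal_pairs_eq ?(lt_last_index kl jk) //.
  by have [[]] := uv_principal j.
have uk_orth (j : 'I_p) : j != k -> dotv (u j) (u k) = 0.
  by move=> jk; rewrite principal_pairs_orthonormal (negbTE jk).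
have ue := u_last_expand principal_pairs_orthonormal uB uA Bu uk_orth.
set a := dotv u_last (u k) in ue.
have a1 : a ^+ 2 = 1 by apply: unit_scaled_u_last; rewrite -ue.
apply/le_anti/andP; split.
  exact: (last_pair_le principal_pairs_orthonormal uB uA Bu u1 uk_orth Av v1).
(* the pair (u k, a *: v_last) is admissible for the k-th maximum *)
rewrite -(dotv_scaled_last_pair a1) -ue; apply: umax => //.
- by rewrite /in_null -scalemxAr v_last_null scaler0.
- by rewrite dotvZl dotvZr v_last_unit mulr1 -expr2.
move=> j jk; split; first exact: (proj1 (uv_orth j jk)).
have jk' : j != k := negbT (ltn_eqF jk).
rewrite dotvZr -principal_pairs_eq ?(lt_last_index kl jk') //.
by rewrite dotvC v_last_orth ?uA ?mulr0.
Qed.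

End PrincipalPairs.

End SelectionNullSpaces.

Theorem lemma2p4 (R : realType) (N r : nat) (hN : (2 <= N)%N)
    (hr1 : (1 <= r)%N) (hrN : (r < N)%N) (i : 'I_r -> 'I_N) (hi : injective i) :
  (exists u v : 'I_(N - r) -> 'cV[R]_N,
      principal_pairs (selB R i) (onesA R N) u v) /\
  (forall u v : 'I_(N - r) -> 'cV[R]_N,
      principal_pairs (selB R i) (onesA R N) u v ->
      (forall k : 'I_(N - r), (k < N - r - 1)%N -> dotv (u k) (v k) = 1) /\
      (forall k : 'I_(N - r), (k : nat) = (N - r - 1)%N ->
          dotv (u k) (v k) = Num.sqrt (r%:R / N%:R))).
Proof.
split; first exact: principal_pairs_exist.
move=> u v uv_principal; split=> k.
  exact: (principal_pairs_cos1 hr1 hrN uv_principal (k := k)).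
exact: (principal_pairs_cos_last hi hr1 hrN uv_principal (k := k)).
Qed.
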